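(* Let $\mathcal P$ be an energy timed path, $E$ a closed interval with rational bounds, and $\mathcal R=\mathcal R^E_{\mathcal P}$ the associated energy function. For every decreasing sequence $(I_j)_{j\in\mathbb N}$ of intervals in $\mathcal I(E)$ (i.e. $I_j\supseteq I_{j+1}$ for all $j$), $$\mathcal R^{-1}\Big(\bigcap_{j\in\mathbb N} I_j\Big)=\bigcap_{j\in\mathbb N}\mathcal R^{-1}(I_j)\qquad\text{and}\qquad \mathcal R\Big(\bigcap_{j\in\mathbb N} I_j\Big)=\bigcap_{j\in\mathbb N}\mathcal R(I_j).$$
   Context: An energy timed automaton (ETA) is a tuple $\langle S,S_0,X,\mathrm{Inv},r,T\rangle$ where $S$ is a finite set of states, $S_0\subseteq S$ the initial states, $X$ a finite set of clocks, $\mathrm{Inv}$ assigns to each state an invariant which is a conjunction of closed (non-strict) clock constraints $x\bowtie c$ with $\bowtie\in\{\le,\ge,=\}$ and $c$ rational, $r\colon S\to\mathbb Q$ assigns an energy rate to each state, and $T$ is a finite set of transitions $(s,g,u,z,s')$ with $g$ a closed clock constraint (guard), $u\in\mathbb Q$ an energy update, and $z\subseteq X$ a set of clocks to reset. Given transitions $t_i=(s_i,g_i,u_i,z_i,s_{i+1})$, $0\le i<n$, a finite run is a sequence of configurations $(\ell_j,v_j,w_j)_{0\le j\le 2n}$ (state, clock valuation, energy level) for which there exist delays $d_i\ge 0$ with: $\ell_{2j}=\ell_{2j+1}=s_j$, $\ell_{2n}=s_n$; $v_{2j+1}=v_{2j}+d_j$ and $v_{2j+2}=v_{2j+1}[z_j\to0]$;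 $v_{2j}\models\mathrm{Inv}(s_j)$ and $v_{2j+1}\models \mathrm{Inv}(s_j)\wedge g_j$; $w_{2j+1}=w_{2j}+d_j\,r(s_j)$ and $w_{2j+2}=w_{2j+1}+u_j$. An energy constraint is a closed interval $E$ with rational bounds; a run satisfies $E$ if all its energy levels $w_j$ lie in $E$. $\mathcal I(E)$ denotes the set of closed subintervals of $E$ (including $\emptyset$). An energy timed path (ETP) from $s_0$ to $s_n$ is an ETA with states $s_0,\dots,s_n$, initial state $s_0$, and exactly one transition from $s_i$ to $s_{i+1}$ for each $0\le i<n$ (and no other transitions). The binary energy relation $\mathcal R^E_{\mathcal P}\subseteq E\times E$ of an ETP $\mathcal P$ holds for $(w_0,w_1)$ iff there is a finite run of $\mathcal P$ from $(s_0,\mathbf 0,w_0)$ to $(s_n,\mathbf 0,w_1)$ satisfying $E$ ($\mathbf 0$ the all-zero valuation). The associated energy function maps $I\in\mathcal I(E)$ to $\mathcal R(I)=\{w_1\in E\mid\exists w_0\in I.\ \mathcal R(w_0,w_1)\}$, and $\mathcal R^{-1}(I)=\{w_0\in E\mid \exists w_1\in I.\ \mathcal R(w_0,w_1)\}$. *)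

From Stdlib Require Import Reals QArith Qreals List.
Open Scope R_scope.

(** Clocks are the natural numbers [x < nclk] of an ETP; valuations map
    clocks to nonnegative reals (only clocks [< nclk] are meaningful). *)
Definition valuation := nat -> R.

Definition zero_val : valuation := fun _ => 0.

Definition delay (v : valuation) (d : R) : valuation := fun x => v x + d.

Definition reset (z : list nat) (v : valuation) : valuation :=
  fun x => if existsb (Nat.eqb x) z then 0 else v x.

Inductive cmp := CLe | CGe | CEq.

Record atom := mkAtom { a_clock : nat; a_cmp : cmp; a_const : Q }.

Definition constraint := list atom.

Definition sat_atom (v : valuation) (a : atom) : Prop :=
  match a_cmp a with
  | CLe => v (a_clock a) <= Q2R (a_const a)
  | CGe => v (a_clock a) >= Q2R (a_const a)
  | CEq => v (a_clock a) = Q2R (a_const a)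
  end.

Definition sat (v : valuation) (g : constraint) : Prop :=
  forall a, In a g -> sat_atom v a.

(** An energy timed path with states s_0,...,s_n (represented by indices
    0..n), initial state s_0, and exactly one transition
    t_i = (s_i, g_i, u_i, z_i, s_{i+1}) for each i < n. *)
Record ETP := mkETP {
  etp_n     : nat;
  etp_nclk  : nat;
  etp_inv   : nat -> constraint;
  etp_rate  : nat -> Q;
  etp_guard : nat -> constraint;
  etp_upd   : nat -> Q;
  etp_reset : nat -> list nat
}.

Definition constraint_wf (k : nat) (g : constraint) : Prop :=
  forall a, In a g -> (a_clock a < k)%nat.

Definition ETP_wf (P : ETP) : Prop :=
  (forall i, (i <= etp_n P)%nat -> constraint_wf (etp_nclk P) (etp_inv P i)) /\
  (forall i, (i < etp_n P)%nat ->
     constraint_wf (etp_nclk P) (etp_guard P i) /\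
     (forall x, In x (etp_reset P i) -> (x < etp_nclk P)%nat)).

Definition inE (lo hi : Q) (w : R) : Prop := Q2R lo <= w <= Q2R hi.

(** Given delays d_j, valuations v_{2j} and energies w_{2j} of the run
    starting from (s_0, v0, w0). *)
Fixpoint run_val (P : ETP) (v0 : valuation) (d : nat -> R) (j : nat) : valuation :=
  match j with
  | O => v0
  | S j' => reset (etp_reset P j') (delay (run_val P v0 d j') (d j'))
  end.

Fixpoint run_en (P : ETP) (w0 : R) (d : nat -> R) (j : nat) : R :=
  match j with
  | O => w0
  | S j' => run_en P w0 d j' + d j' * Q2R (etp_rate P j') + Q2R (etp_upd P j')
  end.

Definition run_ok (P : ETP) (lo hi : Q) (v0 : valuation) (w0 : R) (d : nat -> R) : Prop :=
  (forall j, (j < etp_n P)%nat ->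
     0 <= d j /\
     sat (run_val P v0 d j) (etp_inv P j) /\
     sat (delay (run_val P v0 d j) (d j)) (etp_inv P j ++ etp_guard P j) /\
     inE lo hi (run_en P w0 d j) /\
     inE lo hi (run_en P w0 d j + d j * Q2R (etp_rate P j))) /\
  inE lo hi (run_en P w0 d (etp_n P)).

Definition energy_rel (P : ETP) (lo hi : Q) (w0 w1 : R) : Prop :=
  inE lo hi w0 /\ inE lo hi w1 /\
  exists d : nat -> R,
    run_ok P lo hi zero_val w0 d /\
    (forall x, (x < etp_nclk P)%nat -> run_val P zero_val d (etp_n P) x = 0) /\
    run_en P w0 d (etp_n P) = w1.

Definition rset := R -> Prop.

Definition closed_subinterval (lo hi : Q) (I : rset) : Prop :=
  (forall x, ~ I x) \/
  exists l u, l <= u /\ inE lo hi l /\ inE lo hi u /\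
              (forall x, I x <-> l <= x <= u).

Definition efun (P : ETP) (lo hi : Q) (I : rset) : rset :=
  fun w1 => inE lo hi w1 /\ exists w0, I w0 /\ energy_rel P lo hi w0 w1.

Definition efun_inv (P : ETP) (lo hi : Q) (I : rset) : rset :=
  fun w0 => inE lo hi w0 /\ exists w1, I w1 /\ energy_rel P lo hi w0 w1.

Definition bigcap (I : nat -> rset) : rset := fun x => forall j, I j x.

Definition set_eq (A B : rset) : Prop := forall x, A x <-> B x.

(* Fix the initial energy w0.  A run is determined by its delays, and every
   condition on it (invariants, guards, energy bounds, final clock values) is
   an affine inequality in the delays and the two energies.  Hence the final
   energies reachable from w0 form the projection of a polyhedron, which
   Fourier-Motzkin elimination shows to be a finite intersection of closed
   half-lines.  If w0 lies in every R^-1(I_j), the sets I_j intersected with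
   this projection are nested, nonempty closed intervals, so by completeness
   they share a point, which witnesses w0 in R^-1 of the intersection.  The
   image R is treated symmetrically, fixing the final energy instead. *)

From Stdlib Require Import Reals QArith Qreals List Lra Lia.
Import ListNotations.
Open Scope R_scope.

Definition affine := (list (nat * R) * R)%type.

Definition lsum (ts : list (nat * R)) (x : nat -> R) : R :=
  fold_right (fun ic s => snd ic * x (fst ic) + s) 0 ts.

Definition aeval (e : affine) (x : nat -> R) : R := lsum (fst e) x + snd e.

Definition acoef (e : affine) (k : nat) : R :=
  fold_right (fun ic s => (if Nat.eqb (fst ic) k then snd ic else 0) + s) 0 (fst e).

Definition avar (k : nat) : affine := ([(k, 1)], 0).
Definition aconst (c : R) : affine := ([], c).
Definition aadd (e f : affine) : affine := (fst e ++ fst f, snd e + snd f).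
Definition ascale (r : R) (e : affine) : affine :=
  (map (fun ic => (fst ic, r * snd ic)) (fst e), r * snd e).
Definition ale (e f : affine) : affine := aadd e (ascale (-1) f).

Definition upd (x : nat -> R) (k : nat) (t : R) : nat -> R :=
  fun i => if Nat.eqb i k then t else x i.

Lemma aeval_var k x : aeval (avar k) x = x k.
Proof. unfold aeval, lsum; simpl; ring. Qed.

Lemma aeval_const c x : aeval (aconst c) x = c.
Proof. unfold aeval, lsum; simpl; ring. Qed.

Lemma lsum_app ts us x : lsum (ts ++ us) x = lsum ts x + lsum us x.
Proof. induction ts as [|t ts IH]; simpl; [ring|]. unfold lsum in *; simpl; rewrite IH; ring. Qed.

Lemma aeval_add e f x : aeval (aadd e f) x = aeval e x + aeval f x.
Proof. unfold aeval, aadd; simpl; rewrite lsum_app; ring. Qed.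

Lemma aeval_scale r e x : aeval (ascale r e) x = r * aeval e x.
Proof.
  unfold aeval, ascale; simpl. destruct e as [ts c]; simpl.
  induction ts as [|t ts IH]; unfold lsum in *; simpl in *; lra.
Qed.

Lemma aeval_ale e f x : aeval (ale e f) x <= 0 <-> aeval e x <= aeval f x.
Proof. unfold ale; rewrite aeval_add, aeval_scale; lra. Qed.

Lemma aeval_upd e x k t : aeval e (upd x k t) = aeval e x + acoef e k * (t - x k).
Proof.
  destruct e as [ts c]; unfold aeval, acoef; simpl.
  induction ts as [|[i a] ts IH]; unfold lsum in *; simpl in *; [ring|].
  unfold upd at 1; destruct (Nat.eqb_spec i k); subst; lra.
Qed.

Lemma aeval_ext e x y :
  (forall i, In i (map fst (fst e)) -> x i = y i) -> aeval e x = aeval e y.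
Proof.
  destruct e as [ts c]; unfold aeval; simpl; intros Hxy; f_equal.
  induction ts as [|[i a] ts IH]; unfold lsum in *; simpl in *; [reflexivity|].
  rewrite Hxy, IH by auto; reflexivity.
Qed.

Definition holds (cs : list affine) (x : nat -> R) : Prop :=
  Forall (fun e => aeval e x <= 0) cs.

Definition vars (cs : list affine) : list nat := flat_map (fun e => map fst (fst e)) cs.

Lemma holds_ext cs x y :
  (forall i, In i (vars cs) -> x i = y i) -> holds cs x -> holds cs y.
Proof.
  intros Hxy Hx; unfold holds in *; rewrite Forall_forall in *; intros e He.
  rewrite <- (aeval_ext e x y); auto.
  intros i Hi; apply Hxy, in_flat_map; eauto.
Qed.

Definition halflines (hs : list (R * R)) (t : R) : Prop :=
  Forall (fun h => fst h * t + snd h <= 0) hs.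

Lemma halfline_pos a b t : 0 < a -> (a * t + b <= 0 <-> t <= - b / a).
Proof. intros Ha; assert (a * (- b / a) = - b) by (field; lra); split; intros; nra. Qed.

Lemma halfline_neg a b t : a < 0 -> (a * t + b <= 0 <-> - b / a <= t).
Proof. intros Ha; assert (a * (- b / a) = - b) by (field; lra); split; intros; nra. Qed.

Lemma list_separation (L U : list R) :
  (forall l u, In l L -> In u U -> l <= u) ->
  exists t, (forall l, In l L -> l <= t) /\ (forall u, In u U -> t <= u).
Proof.
  induction L as [|l L IH]; intros HLU.
  - clear HLU; induction U as [|u U IHU].
    + exists 0; split; intros ? [].
    + destruct IHU as [t [_ Ht]]; exists (Rmin u t); split; [intros ? []|].
      intros v [<-|Hv]; [apply Rmin_l|eapply Rle_trans; [apply Rmin_r|auto]].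
  - destruct IH as [t [HL HU]]; [intros; apply HLU; simpl; auto|].
    exists (Rmax l t); split.
    + intros v [<-|Hv]; [apply Rmax_l|eapply Rle_trans; [apply HL; auto|apply Rmax_r]].
    + intros u Hu; apply Rmax_lub; auto; apply HLU; simpl; auto.
Qed.

Definition select {A} {P : A -> Prop} (dec : forall a, {P a} + {~ P a}) (l : list A) : list A :=
  filter (fun a => if dec a then true else false) l.

Lemma in_select {A} {P : A -> Prop} (dec : forall a, {P a} + {~ P a}) l a :
  In a (select dec l) <-> In a l /\ P a.
Proof.
  unfold select; rewrite filter_In.
  destruct (dec a); split; intros []; try discriminate; tauto.
Qed.

Lemma halflines_nonempty_iff hs :
  (exists t, halflines hs t) <->
  (forall h, In h hs -> fst h = 0 -> snd h <= 0) /\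
  (forall p n, In p hs -> In n hs -> 0 < fst p -> fst n < 0 ->
     fst p * snd n - fst n * snd p <= 0).
Proof.
  unfold halflines; split.
  - intros [t Ht]; rewrite Forall_forall in Ht; split.
    + intros h Hh H0; specialize (Ht h Hh); rewrite H0 in Ht; lra.
    + intros p n Hp Hn Hap Han; assert (Hp' := Ht p Hp); assert (Hn' := Ht n Hn); nra.
  - intros [Hzero Hpair].
    set (bound := fun h : R * R => - snd h / fst h).
    destruct (list_separation
      (map bound (select (fun h => Rlt_dec (fst h) 0) hs))
      (map bound (select (fun h => Rlt_dec 0 (fst h)) hs))) as [t [Hlow Hup]].
    + intros l u Hl Hu.
      apply in_map_iff in Hl as [n [<- Hn]]; apply in_map_iff in Hu as [p [<- Hp]].
      apply in_select in Hn as [Hn Han]; apply in_select in Hp as [Hp Hap].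
      apply halfline_pos; auto; unfold bound.
      assert (fst n * (- snd n / fst n) = - snd n) by (field; lra).
      specialize (Hpair p n Hp Hn Hap Han); nra.
    + exists t; rewrite Forall_forall; intros h Hh.
      destruct (Rtotal_order (fst h) 0) as [Hneg|[Hz|Hpos]].
      * apply halfline_neg; auto; apply (Hlow (bound h)), in_map, in_select; auto.
      * rewrite Hz; specialize (Hzero h Hh Hz); lra.
      * apply halfline_pos; auto; apply (Hup (bound h)), in_map, in_select; auto.
Qed.

(** * Fourier-Motzkin elimination *)

Definition slice (k : nat) (x : nat -> R) (e : affine) : R * R :=
  (acoef e k, aeval e x - acoef e k * x k).

Lemma holds_upd cs x k t : holds cs (upd x k t) <-> halflines (map (slice k x) cs) t.
Proof.
  unfold holds, halflines; rewrite Forall_map.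
  split; apply Forall_impl; intros e; simpl; rewrite aeval_upd; lra.
Qed.

Definition comb (k : nat) (p n : affine) : affine :=
  aadd (ascale (- acoef n k) p) (ascale (acoef p k) n).

Lemma aeval_comb k p n x :
  aeval (comb k p n) x =
  fst (slice k x p) * snd (slice k x n) - fst (slice k x n) * snd (slice k x p).
Proof. unfold comb, slice; rewrite aeval_add, !aeval_scale; simpl; ring. Qed.

Definition fm_step (k : nat) (cs : list affine) : list affine :=
  select (fun e => Req_EM_T (acoef e k) 0) cs ++
  map (fun pn => comb k (fst pn) (snd pn))
    (list_prod (select (fun e => Rlt_dec 0 (acoef e k)) cs)
               (select (fun e => Rlt_dec (acoef e k) 0) cs)).

Lemma fm_step_correct k cs x :
  holds (fm_step k cs) x <-> exists t, holds cs (upd x k t).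
Proof.
  setoid_rewrite holds_upd; rewrite halflines_nonempty_iff.
  unfold holds, fm_step; rewrite Forall_app, Forall_map, !Forall_forall.
  split; intros [Hzero Hpair]; split.
  - intros h Hh H0; apply in_map_iff in Hh as [e [<- He]]; simpl in *.
    assert (aeval e x <= 0) by (apply Hzero, in_select; auto).
    rewrite H0; lra.
  - intros sp sn Hp Hn Hap Han.
    apply in_map_iff in Hp as [p [<- Hp]]; apply in_map_iff in Hn as [n [<- Hn]].
    rewrite <- aeval_comb; apply (Hpair (p, n)), in_prod; apply in_select; auto.
  - intros e He; apply in_select in He as [He H0].
    assert (H := Hzero _ (in_map (slice k x) _ _ He) H0); simpl in H.
    rewrite H0 in H; lra.
  - intros [p n] Hpn; apply in_prod_iff in Hpn as [Hp Hn].
    apply in_select in Hp as [Hp Hap]; apply in_select in Hn as [Hn Han].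
    simpl; rewrite aeval_comb; apply Hpair; auto using in_map.
Qed.

Definition eliminate (ks : list nat) (cs : list affine) : list affine :=
  fold_right fm_step cs ks.

Lemma eliminate_correct ks cs x :
  holds (eliminate ks cs) x <->
  exists y, (forall i, ~ In i ks -> y i = x i) /\ holds cs y.
Proof.
  revert x; induction ks as [|k ks IH]; intros x; simpl.
  - split; [intros H; exists x; auto|].
    intros [y [Hyx Hy]]; apply (holds_ext cs y x); auto.
  - rewrite fm_step_correct; split.
    + intros [t Ht]; apply IH in Ht as [y [Hyx Hy]]; exists y; split; auto.
      intros i Hi; rewrite Hyx by tauto; unfold upd.
      destruct (Nat.eqb_spec i k); subst; tauto.
    + intros [y [Hyx Hy]]; exists (y k); apply IH; exists y; split; auto.
      intros i Hi; unfold upd; destruct (Nat.eqb_spec i k); subst; auto.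
      apply Hyx; intros [|]; auto.
Qed.

Lemma projection cs p :
  exists hs, forall t, (exists x, x p = t /\ holds cs x) <-> halflines hs t.
Proof.
  set (ks := remove Nat.eq_dec p (vars cs)).
  exists (map (slice p zero_val) (eliminate ks cs)); intros t.
  rewrite <- holds_upd, eliminate_correct; split.
  - intros [x [<- Hx]].
    exists (fun i => if in_dec Nat.eq_dec i ks then x i else upd zero_val p (x p) i).
    split.
    + intros i Hi; destruct (in_dec Nat.eq_dec i ks); tauto.
    + apply (holds_ext cs x); auto.
      intros i Hi; destruct (in_dec Nat.eq_dec i ks); auto.
      unfold upd; destruct (Nat.eqb_spec i p); subst; auto.
      exfalso; apply n, in_in_remove; auto.
  - intros [y [Hy Hcs]]; exists y; split; auto.
    rewrite Hy; [unfold upd; rewrite Nat.eqb_refl; auto|].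
    intros Hp; apply in_remove in Hp; tauto.
Qed.

(** * Nested intervals *)

Definition interval (l u : R) (t : R) : Prop := l <= t <= u.

Lemma interval_inter_halfline l u a b :
  exists l' u', forall t, interval l u t /\ a * t + b <= 0 <-> interval l' u' t.
Proof.
  unfold interval.
  destruct (Rtotal_order a 0) as [Ha|[Ha|Ha]].
  - exists (Rmax l (- b / a)), u; intros t; rewrite halfline_neg by auto.
    unfold Rmax; destruct (Rle_dec l (- b / a)); lra.
  - subst; destruct (Rle_dec b 0).
    + exists l, u; intros t; lra.
    + exists 1, 0; intros t; lra.
  - exists l, (Rmin u (- b / a)); intros t; rewrite halfline_pos by auto.
    unfold Rmin; destruct (Rle_dec u (- b / a)); lra.
Qed.

Lemma interval_inter_halflines l u hs :
  exists l' u', forall t, interval l u t /\ halflines hs t <-> interval l' u' t.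
Proof.
  revert l u; induction hs as [|h hs IH]; intros l u.
  - exists l, u; intros t; unfold halflines; rewrite Forall_nil_iff; tauto.
  - destruct (interval_inter_halfline l u (fst h) (snd h)) as [l1 [u1 H1]].
    destruct (IH l1 u1) as [l2 [u2 H2]]; exists l2, u2; intros t.
    unfold halflines; rewrite Forall_cons_iff, <- H2, <- H1; fold (halflines hs t); tauto.
Qed.

Lemma nested_le (J : nat -> R -> Prop) :
  (forall j t, J (S j) t -> J j t) -> forall j k t, (j <= k)%nat -> J k t -> J j t.
Proof. intros HJ j k t Hjk; induction Hjk; auto. Qed.

Lemma nested_intervals_meet (J : nat -> R -> Prop) :
  (forall j t, J (S j) t -> J j t) ->
  (forall j, exists l u, forall t, J j t <-> interval l u t) ->
  (forall j, exists t, J j t) ->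
  exists t, forall j, J j t.
Proof.
  intros Hnest Hint Hne.
  set (lower := fun s => exists j, forall t, J j t -> s <= t).
  assert (Hup : forall j l u, (forall t, J j t <-> interval l u t) -> is_upper_bound lower u).
  { intros j l u Hj s [i Hi]; destruct (Hne (max i j)) as [t Ht].
    apply Rle_trans with t.
    - apply Hi, (nested_le J Hnest i (max i j)); auto; lia.
    - apply Hj, (nested_le J Hnest j (max i j)); auto; lia. }
  destruct (Hint 0%nat) as [l0 [u0 H0]].
  destruct (completeness lower) as [s [Hs_ub Hs_lub]].
  - exists u0; eapply Hup; eauto.
  - exists l0, 0%nat; intros t Ht; apply H0 in Ht; apply Ht.
  - exists s; intros j; destruct (Hint j) as [l [u Hj]]; apply Hj; split.
    + apply Hs_ub; exists j; intros t Ht; apply Hj in Ht; apply Ht.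
    + apply Hs_lub; eapply Hup; eauto.
Qed.

Lemma bigcap_meets_halflines lo hi (I : nat -> rset) hs :
  (forall j, closed_subinterval lo hi (I j)) ->
  (forall j t, I (S j) t -> I j t) ->
  (forall j, exists t, I j t /\ halflines hs t) ->
  exists t, bigcap I t /\ halflines hs t.
Proof.
  intros Hcl Hnest Hmeet.
  destruct (nested_intervals_meet (fun j t => I j t /\ halflines hs t)) as [t Ht].
  - intros j t [Hi Hh]; auto.
  - intros j; destruct (Hcl j) as [Hempty|[l [u [_ [_ [_ Hj]]]]]].
    + destruct (Hmeet j) as [t [Ht _]]; destruct (Hempty t Ht).
    + destruct (interval_inter_halflines l u hs) as [l' [u' H]].
      exists l', u'; intros t; rewrite <- H, Hj; reflexivity.
  - exact Hmeet.
  - exists t; split; [intros j; apply Ht|apply (Ht 0%nat)].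
Qed.

Lemma image_bigcap (Rel : R -> R -> Prop) lo hi (I : nat -> rset) :
  (forall w, exists hs, forall t, Rel w t <-> halflines hs t) ->
  (forall j, closed_subinterval lo hi (I j)) ->
  (forall j t, I (S j) t -> I j t) ->
  set_eq (fun w => inE lo hi w /\ exists t, bigcap I t /\ Rel w t)
         (bigcap (fun j w => inE lo hi w /\ exists t, I j t /\ Rel w t)).
Proof.
  intros Hsec Hcl Hnest w; split.
  - intros [Hw [t [Ht HR]]] j; split; auto; exists t; auto.
  - intros Hw; split; [apply (Hw 0%nat)|].
    destruct (Hsec w) as [hs Hhs].
    destruct (bigcap_meets_halflines lo hi I hs Hcl Hnest) as [t [Ht HR]].
    + intros j; destruct (Hw j) as [_ [t [Ht HR]]]; exists t; rewrite <- Hhs; auto.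
    + exists t; rewrite Hhs; auto.
Qed.

(** * The energy relation is polyhedral *)

Lemma holds_app cs ds x : holds (cs ++ ds) x <-> holds cs x /\ holds ds x.
Proof. apply Forall_app. Qed.

Lemma holds_cons e cs x : holds (e :: cs) x <-> aeval e x <= 0 /\ holds cs x.
Proof. apply Forall_cons_iff. Qed.

Lemma holds_nil x : holds [] x <-> True.
Proof. apply Forall_nil_iff. Qed.

Lemma holds_flat_map {A} (f : A -> list affine) l x :
  holds (flat_map f l) x <-> forall a, In a l -> holds (f a) x.
Proof. unfold holds; rewrite Forall_flat_map, Forall_forall; reflexivity. Qed.

Definition aeq (e f : affine) : list affine := [ale e f; ale f e].

Lemma holds_aeq e f x : holds (aeq e f) x <-> aeval e x = aeval f x.
Proof. unfold aeq; rewrite !holds_cons, holds_nil, !aeval_ale; lra. Qed.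

Definition atom_cs (V : nat -> affine) (a : atom) : list affine :=
  let c := aconst (Q2R (a_const a)) in
  match a_cmp a with
  | CLe => [ale (V (a_clock a)) c]
  | CGe => [ale c (V (a_clock a))]
  | CEq => aeq (V (a_clock a)) c
  end.

Lemma holds_constraint V v g x :
  (forall c, aeval (V c) x = v c) ->
  holds (flat_map (atom_cs V) g) x <-> sat v g.
Proof.
  intros HV; rewrite holds_flat_map; unfold sat.
  assert (Hatom : forall a, holds (atom_cs V a) x <-> sat_atom v a).
  { intros a; unfold atom_cs, sat_atom; destruct (a_cmp a);
      rewrite ?holds_aeq, ?holds_cons, ?holds_nil, ?aeval_ale, ?aeval_const, HV; lra. }
  setoid_rewrite Hatom; reflexivity.
Qed.

Section Encoding.

Variables (P : ETP) (lo hi : Q).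

(* Variable 0 is the initial energy, variable 1 the final energy and
   variable [2 + j] the delay spent in state [s_j]. *)
Definition delays (x : nat -> R) : nat -> R := fun j => x (2 + j)%nat.

Fixpoint clock_expr (j c : nat) : affine :=
  match j with
  | O => aconst 0
  | S j' => if existsb (Nat.eqb c) (etp_reset P j') then aconst 0
            else aadd (clock_expr j' c) (avar (2 + j'))
  end.

Fixpoint energy_expr (j : nat) : affine :=
  match j with
  | O => avar 0
  | S j' => aadd (aadd (energy_expr j') (ascale (Q2R (etp_rate P j')) (avar (2 + j'))))
                 (aconst (Q2R (etp_upd P j')))
  end.

Lemma aeval_clock_expr j c x :
  aeval (clock_expr j c) x = run_val P zero_val (delays x) j c.
Proof.
  induction j as [|j IH]; simpl; [apply aeval_const|].
  unfold reset, delay; destruct (existsb (Nat.eqb c) (etp_reset P j)).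
  - apply aeval_const.
  - rewrite aeval_add, IH, aeval_var; reflexivity.
Qed.

Lemma aeval_energy_expr j x :
  aeval (energy_expr j) x = run_en P (x 0%nat) (delays x) j.
Proof.
  induction j as [|j IH]; simpl; [apply aeval_var|].
  rewrite !aeval_add, aeval_scale, aeval_const, IH, aeval_var; unfold delays; simpl; ring.
Qed.

Definition energy_cs (e : affine) : list affine :=
  [ale (aconst (Q2R lo)) e; ale e (aconst (Q2R hi))].

Lemma holds_energy_cs e x : holds (energy_cs e) x <-> inE lo hi (aeval e x).
Proof.
  unfold energy_cs, inE; rewrite !holds_cons, holds_nil, !aeval_ale, !aeval_const; tauto.
Qed.

Definition step_cs (j : nat) : list affine :=
  ale (aconst 0) (avar (2 + j)) ::
  flat_map (atom_cs (clock_expr j)) (etp_inv P j) ++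
  flat_map (atom_cs (fun c => aadd (clock_expr j c) (avar (2 + j))))
    (etp_inv P j ++ etp_guard P j) ++
  energy_cs (energy_expr j) ++
  energy_cs (aadd (energy_expr j) (ascale (Q2R (etp_rate P j)) (avar (2 + j)))).

Lemma holds_step_cs j x :
  holds (step_cs j) x <->
  0 <= delays x j /\
  sat (run_val P zero_val (delays x) j) (etp_inv P j) /\
  sat (delay (run_val P zero_val (delays x) j) (delays x j)) (etp_inv P j ++ etp_guard P j) /\
  inE lo hi (run_en P (x 0%nat) (delays x) j) /\
  inE lo hi (run_en P (x 0%nat) (delays x) j + delays x j * Q2R (etp_rate P j)).
Proof.
  unfold step_cs; rewrite holds_cons, aeval_ale, aeval_const, aeval_var, !holds_app.
  rewrite !holds_energy_cs, aeval_add, aeval_scale, aeval_var, aeval_energy_expr.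
  rewrite (holds_constraint _ (run_val P zero_val (delays x) j))
    by (intros c; apply aeval_clock_expr).
  rewrite (holds_constraint _ (delay (run_val P zero_val (delays x) j) (delays x j)))
    by (intros c; rewrite aeval_add, aeval_clock_expr, aeval_var; reflexivity).
  unfold delays; rewrite (Rmult_comm (Q2R _)); tauto.
Qed.

Definition run_cs : list affine :=
  flat_map step_cs (seq 0 (etp_n P)) ++
  energy_cs (energy_expr (etp_n P)) ++
  flat_map (fun c => aeq (clock_expr (etp_n P) c) (aconst 0)) (seq 0 (etp_nclk P)) ++
  energy_cs (avar 0) ++ energy_cs (avar 1) ++
  aeq (energy_expr (etp_n P)) (avar 1).

Lemma holds_run_cs x :
  holds run_cs x <->
  inE lo hi (x 0%nat) /\ inE lo hi (x 1%nat) /\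
  run_ok P lo hi zero_val (x 0%nat) (delays x) /\
  (forall c, (c < etp_nclk P)%nat -> run_val P zero_val (delays x) (etp_n P) c = 0) /\
  run_en P (x 0%nat) (delays x) (etp_n P) = x 1%nat.
Proof.
  unfold run_cs, run_ok; rewrite !holds_app, !holds_flat_map, !holds_energy_cs.
  rewrite holds_aeq, !aeval_var, aeval_energy_expr.
  setoid_rewrite holds_step_cs; setoid_rewrite holds_aeq.
  setoid_rewrite aeval_clock_expr; setoid_rewrite aeval_const.
  assert (Hseq : forall n a, In a (seq 0 n) <-> (a < n)%nat) by (intros; rewrite in_seq; lia).
  setoid_rewrite Hseq; tauto.
Qed.

Lemma energy_rel_polyhedral w0 w1 :
  energy_rel P lo hi w0 w1 <-> exists x, x 0%nat = w0 /\ x 1%nat = w1 /\ holds run_cs x.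
Proof.
  split.
  - intros [Hw0 [Hw1 [d [Hrun [Hclk Hen]]]]].
    exists (fun i => match i with O => w0 | 1%nat => w1 | S (S j) => d j end).
    do 2 (split; [reflexivity|]); apply holds_run_cs; auto.
  - intros [x [<- [<- Hx]]]; apply holds_run_cs in Hx as [Hw0 [Hw1 [Hrun [Hclk Hen]]]].
    split; [|split]; auto; exists (delays x); auto.
Qed.
End Encoding.

Lemma polyhedral_section cs q p w :
  exists hs, forall t, (exists x, x q = w /\ x p = t /\ holds cs x) <-> halflines hs t.
Proof.
  destruct (projection (aeq (avar q) (aconst w) ++ cs) p) as [hs Hhs].
  exists hs; intros t; rewrite <- Hhs.
  setoid_rewrite holds_app; setoid_rewrite holds_aeq.
  setoid_rewrite aeval_var; setoid_rewrite aeval_const; firstorder.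
Qed.

Lemma energy_rel_section_fst P lo hi w0 :
  exists hs, forall w1, energy_rel P lo hi w0 w1 <-> halflines hs w1.
Proof.
  destruct (polyhedral_section (run_cs P lo hi) 0 1 w0) as [hs Hhs].
  exists hs; intros w1; rewrite energy_rel_polyhedral; apply Hhs.
Qed.

Lemma energy_rel_section_snd P lo hi w1 :
  exists hs, forall w0, energy_rel P lo hi w0 w1 <-> halflines hs w0.
Proof.
  destruct (polyhedral_section (run_cs P lo hi) 1 0 w1) as [hs Hhs].
  exists hs; intros w0; rewrite energy_rel_polyhedral, <- Hhs; firstorder.
Qed.

Theorem mainTheorem1 (P : ETP) (lo hi : Q) (I : nat -> rset) :
  ETP_wf P ->
  (forall j, closed_subinterval lo hi (I j)) ->
  (forall j x, I (S j) x -> I j x) ->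
  set_eq (efun_inv P lo hi (bigcap I)) (bigcap (fun j => efun_inv P lo hi (I j))) /\
  set_eq (efun P lo hi (bigcap I)) (bigcap (fun j => efun P lo hi (I j))).
Proof.
  intros _ Hcl Hnest; split.
  - exact (image_bigcap (energy_rel P lo hi) lo hi I
             (energy_rel_section_fst P lo hi) Hcl Hnest).
  - exact (image_bigcap (fun w1 w0 => energy_rel P lo hi w0 w1) lo hi I
             (energy_rel_section_snd P lo hi) Hcl Hnest).
Qed.
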